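(* Let $K\ge1$ and let $f(z)=\sum_{n=0}^\infty a_nz^n+\sum_{n=1}^\infty\overline{b_n}\,\overline{z}^n$ be a $K$-quasiconformal harmonic mapping on $\mathbb{D}$. If there is a constant $M>0$ such that $\ell_f^{\ast}(\theta,1)\le M$ for all $\theta\in[0,2\pi]$, then $|a_n|+|b_n|\le KM$ for all $n\ge1$. In particular, if $K=1$ the estimate is sharp, with extremal function $f(z)=Mz$.
   Context: $\mathbb{D}$ is the open unit disk. A sense-preserving homeomorphism $f\in W^{1,2}_{loc}$ is $K$-quasiconformal if $(|f_z|+|f_{\bar z}|)^2\le K(|f_z|^2-|f_{\bar z}|^2)$. For a harmonic mapping $f$ in $\mathbb{D}$, $\theta\in[0,2\pi]$ and $r\in[0,1)$, $\ell_f^{\ast}(\theta,r)=\int_0^r\left|f_z(\rho e^{i\theta})+e^{-2i\theta}f_{\bar z}(\rho e^{i\theta})\right|d\rho$, and $\ell_f^{\ast}(\theta,1)=\sup_{0<r<1}\ell_f^{\ast}(\theta,r)$. *)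

From Stdlib Require Import Reals.
From Coquelicot Require Import Coquelicot.
Open Scope R_scope.

Definition unit_disk (z : C) : Prop := Cmod z < 1.

Definition dx (f : C -> C) (z : C) : C :=
  (Derive (fun t => fst (f (Cplus z (t, 0)))) 0,
   Derive (fun t => snd (f (Cplus z (t, 0)))) 0).
Definition dy (f : C -> C) (z : C) : C :=
  (Derive (fun t => fst (f (Cplus z (0, t)))) 0,
   Derive (fun t => snd (f (Cplus z (0, t)))) 0).

Definition dz (f : C -> C) (z : C) : C :=
  Cmult (/2, 0) (Cminus (dx f z) (Cmult (0, 1) (dy f z))).
Definition dzb (f : C -> C) (z : C) : C :=
  Cmult (/2, 0) (Cplus (dx f z) (Cmult (0, 1) (dy f z))).

Definition homeo_on_disk (f : C -> C) : Prop :=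
  (forall z, unit_disk z -> continuous f z) /\
  (forall z w, unit_disk z -> unit_disk w -> f z = f w -> z = w) /\
  (forall U : C -> Prop, open U -> (forall z, U z -> unit_disk z) ->
     open (fun w => exists z, U z /\ f z = w)).

(* sense-preserving: positive Jacobian J_f = |f_z|^2 - |f_zbar|^2 *)
Definition sense_preserving (f : C -> C) : Prop :=
  forall z, unit_disk z -> Cmod (dzb f z) ^ 2 < Cmod (dz f z) ^ 2.

(* K-quasiconformal (for smooth f the W^{1,2}_loc condition is automatic
   and the a.e. inequality is equivalent to the pointwise one) *)
Definition K_quasiconformal (K : R) (f : C -> C) : Prop :=
  homeo_on_disk f /\ sense_preserving f /\
  forall z, unit_disk z ->
    (Cmod (dz f z) + Cmod (dzb f z)) ^ 2 <=
      K * (Cmod (dz f z) ^ 2 - Cmod (dzb f z) ^ 2).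

Definition eitheta (t : R) : C := (cos t, sin t).

Definition ell_star (f : C -> C) (theta r : R) : R :=
  RInt (fun rho =>
          Cmod (Cplus (dz f (Cmult (RtoC rho) (eitheta theta)))
                      (Cmult (eitheta (-2 * theta))
                             (dzb f (Cmult (RtoC rho) (eitheta theta))))))
       0 r.

Definition ell_star1 (f : C -> C) (theta : R) : Rbar :=
  Lub_Rbar (fun x => exists r, 0 < r < 1 /\ x = ell_star f theta r).

From Stdlib Require Import Reals Lra Psatz.
From Coquelicot Require Import Coquelicot.
Open Scope R_scope.

(* Write f = h + conj g.  Then f_z = h' and f_zbar = conj g', and quasiconformality gives
   |h'| + |g'| <= K (|h'| - |g'|) <= K |f_z + e^{-2i theta} f_zbar| pointwise.  Integrating
   along the ray of angle theta yields
     |h(r e^{i theta}) - h(0)| + |g(r e^{i theta}) - g(0)| <= K l*_f(theta, r) <= K M.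
   With unimodular l, m such that l a_n = |a_n| and m b_n = |b_n|, the function
   theta |-> l h(r e^{i theta}) + m g(r e^{i theta}) is an absolutely convergent trigonometric
   series whose n-th coefficient is (|a_n| + |b_n|) r^n and which stays within K M of its
   constant term l h(0) + m g(0).  Averaging it against e^{-i n theta} over the N-th roots of
   unity recovers that coefficient up to the tail sum_{k >= N} of the coefficients, which tends
   to 0 as N grows; letting r -> 1 gives |a_n| + |b_n| <= K M.  The derivatives h', g' are
   obtained from the bound |(z+u)^(k+1) - z^(k+1) - (k+1) u z^k| <= (k+1)^2 |u|^2 s^(k-1),
   valid for |z|, |z+u| <= s. *)

(** * Complex numbers and complex series *)

Lemma Cmod_eitheta t : Cmod (eitheta t) = 1.
Proof.
  unfold Cmod, eitheta; cbn [fst snd].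
  rewrite <- sqrt_1; f_equal; rewrite <- (sin2_cos2 t); unfold Rsqr; ring.
Qed.

Lemma eitheta_add s t : eitheta (s + t) = (eitheta s * eitheta t)%C.
Proof.
  apply injective_projections; unfold eitheta; simpl;
    [rewrite cos_plus | rewrite sin_plus]; ring.
Qed.

Lemma eitheta_0 : eitheta 0 = RtoC 1.
Proof. apply injective_projections; unfold eitheta; simpl; [apply cos_0 | apply sin_0]. Qed.

Lemma Cpow_eitheta t k : (eitheta t ^ k)%C = eitheta (INR k * t).
Proof.
  induction k as [|k IH].
  - now rewrite Rmult_0_l, eitheta_0.
  - rewrite Cpow_S, IH, <- eitheta_add, S_INR; f_equal; ring.
Qed.

Lemma eitheta_2PI_mult k : eitheta (2 * INR k * PI) = RtoC 1.
Proof.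
  apply injective_projections; unfold eitheta; simpl; rewrite <- (Rplus_0_l (2 * INR k * PI)).
  - now rewrite cos_period, cos_0.
  - now rewrite sin_period, sin_0.
Qed.

Lemma eitheta_opp t : eitheta (- t) = Cconj (eitheta t).
Proof. apply injective_projections; unfold eitheta; simpl; [apply cos_neg | apply sin_neg]. Qed.

Lemma eitheta_neq_1 t : 0 < Rabs t < 2 * PI -> eitheta t <> RtoC 1.
Proof.
  intros Ht E.
  assert (Hc : cos (Rabs t) = 1) by (unfold Rabs; destruct Rcase_abs;
    [rewrite cos_neg |]; exact (f_equal fst E)).
  assert (Hs : sin (Rabs t) = 0) by (unfold Rabs; destruct Rcase_abs;
    [rewrite sin_neg, (f_equal snd E : sin t = 0); ring | exact (f_equal snd E)]).
  destruct (sin_eq_O_2PI_0 (Rabs t)) as [Ht' | [Ht' | Ht']]; try lra.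
  rewrite Ht', cos_PI in Hc; lra.
Qed.

Lemma Re_le_Cmod c : Re c <= Cmod c.
Proof. generalize (re_le_Cmod c); intros H; apply Rabs_le_between in H; lra. Qed.

Lemma Cmod_as_Re_rotation (w : C) : exists v, Cmod v <= 1 /\ Re (v * w) = Cmod w.
Proof.
  destruct (Ceq_dec w 0) as [-> | Hw].
  - exists (RtoC 0); rewrite Cmod_0, Cmult_0_l; simpl; lra.
  - assert (Hm : 0 < Cmod w) by now apply Cmod_gt_0.
    exists (RtoC (/ Cmod w) * Cconj w)%C; split.
    + rewrite Cmod_mult, Cmod_conj, Cmod_R, Rabs_pos_eq, Rinv_l; try lra.
      now left; apply Rinv_0_lt_compat.
    + rewrite <- Cmult_assoc, (Cmult_comm (Cconj w)), <- Cmod2_conj,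
        <- RtoC_mult, re_RtoC; field; lra.
Qed.

Lemma is_series_Re (u : nat -> C) l :
  is_series u l -> is_series (fun k => Re (u k)) (Re l).
Proof.
  intros H; unfold is_series.
  apply (filterlim_ext (fun N => Re (sum_n u N))).
  - intros N; induction N as [|N IH]; [now rewrite !sum_O | now rewrite !sum_Sn, <- IH].
  - eapply filterlim_comp; [exact H | destruct l; apply continuous_fst].
Qed.

Lemma is_series_Im (u : nat -> C) l :
  is_series u l -> is_series (fun k => Im (u k)) (Im l).
Proof.
  intros H; unfold is_series.
  apply (filterlim_ext (fun N => Im (sum_n u N))).
  - intros N; induction N as [|N IH]; [now rewrite !sum_O | now rewrite !sum_Sn, <- IH].
  - eapply filterlim_comp; [exact H | destruct l; apply continuous_snd].
Qed.

(* Coquelicot's [Series] is real-valued, so a complex series is summed componentwise. *)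
Definition CSeries (u : nat -> C) : C :=
  (Series (fun k => Re (u k)), Series (fun k => Im (u k))).

Lemma is_series_CSeries (u : nat -> C) : ex_series u -> is_series u (CSeries u).
Proof.
  intros [l Hl]; unfold CSeries.
  rewrite (is_series_unique _ _ (is_series_Re _ _ Hl)),
    (is_series_unique _ _ (is_series_Im _ _ Hl)).
  now destruct l.
Qed.

Lemma is_series_C_unique (u : nat -> C) l1 l2 :
  is_series u l1 -> is_series u l2 -> l1 = l2.
Proof. apply filterlim_locally_unique. Qed.

Lemma Cmod_is_series_le (u : nat -> C) l (b : nat -> R) :
  is_series u l -> ex_series b -> (forall k, Cmod (u k) <= b k) -> Cmod l <= Series b.
Proof.
  intros Hu [lb Hb] Hle.
  destruct (Cmod_as_Re_rotation l) as [v [Hv <-]].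
  rewrite (is_series_unique _ _ Hb).
  apply (is_lim_seq_le (sum_n (fun k => Re (v * u k))) (sum_n b) (Re (v * l)) lb).
  - intros N; apply sum_n_m_le; intros k.
    eapply Rle_trans; [apply Re_le_Cmod |].
    rewrite Cmod_mult; specialize (Hle k).
    generalize (Cmod_ge_0 v) (Cmod_ge_0 (u k)); nra.
  - apply is_series_Re, (is_series_scal v _ _ Hu).
  - exact Hb.
Qed.

Lemma is_lim_seq_Cmod_terms (u : nat -> C) :
  ex_series u -> is_lim_seq (fun k => Cmod (u k)) 0.
Proof.
  intros [l Hl].
  assert (HRe := ex_series_lim_0 _ (ex_intro _ _ (is_series_Re _ _ Hl))).
  assert (HIm := ex_series_lim_0 _ (ex_intro _ _ (is_series_Im _ _ Hl))).
  apply (is_lim_seq_le_le (fun _ => 0) _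
           (fun k => sqrt 2 * (Rabs (Re (u k)) + Rabs (Im (u k))))).
  - intros k; split; [apply Cmod_ge_0 |].
    eapply Rle_trans; [apply Cmod_2Rmax |].
    apply Rmult_le_compat_l; [apply sqrt_pos |].
    generalize (Rabs_pos (fst (u k))) (Rabs_pos (snd (u k))); intros.
    apply Rmax_lub; unfold Re, Im; lra.
  - apply is_lim_seq_const.
  - assert (H := is_lim_seq_plus' _ _ _ _ (is_lim_seq_abs _ 0 HRe) (is_lim_seq_abs _ 0 HIm)).
    apply (is_lim_seq_scal_l _ (sqrt 2)) in H.
    simpl in H; now rewrite Rabs_R0, Rplus_0_l, Rmult_0_r in H.
Qed.

(* The next four lemmas restate Coquelicot's [sum_n] lemmas, which are stated for an abstract
   [AbelianMonoid], with carrier [C], so that [ring] and [rewrite] see [Cplus] and [Cmult]. *)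
Lemma sum_n_C_S (u : nat -> C) m : sum_n u (S m) = (sum_n u m + u (S m))%C.
Proof. exact (sum_Sn u m). Qed.

Lemma sum_n_ext_C (u v : nat -> C) m : (forall j, u j = v j) -> sum_n u m = sum_n v m.
Proof. apply sum_n_ext. Qed.

Lemma sum_n_Cmult_l (x : C) (u : nat -> C) m :
  sum_n (fun j => x * u j)%C m = (x * sum_n u m)%C.
Proof. exact (sum_n_mult_l x u m). Qed.

Lemma sum_n_Cplus (u v : nat -> C) m :
  sum_n (fun j => u j + v j)%C m = (sum_n u m + sum_n v m)%C.
Proof. exact (sum_n_plus u v m). Qed.

Lemma Cmod_sum_n_le (u : nat -> C) m B :
  (forall j, (j <= m)%nat -> Cmod (u j) <= B) -> Cmod (sum_n u m) <= INR (S m) * B.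
Proof.
  induction m as [|m IH]; intros Hu.
  - rewrite sum_O, Rmult_1_l; apply Hu; lia.
  - rewrite sum_n_C_S, (S_INR (S m)).
    eapply Rle_trans; [apply Cmod_triangle |].
    specialize (IH (fun j Hj => Hu j ltac:(lia))); specialize (Hu (S m) ltac:(lia)); lra.
Qed.

Lemma sum_n_single (u : nat -> C) n m :
  (n <= m)%nat -> (forall j, (j <= m)%nat -> j <> n -> u j = RtoC 0) -> sum_n u m = u n.
Proof.
  induction m as [|m IH]; intros Hn Hu.
  - replace n with 0%nat by lia; apply sum_O.
  - rewrite sum_n_C_S; destruct (Nat.eq_dec n (S m)) as [-> | Hne].
    + replace (sum_n u m) with (@zero C_AbelianGroup).
      * apply injective_projections; simpl; ring.
      * unfold sum_n; rewrite (sum_n_m_ext_loc u (fun _ => zero)), sum_n_m_const_zero;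
          [easy | intros; apply Hu; lia].
    + rewrite IH, (Hu (S m)) by (lia || (intros; apply Hu; lia)).
      apply injective_projections; simpl; ring.
Qed.

Lemma is_series_single (u : nat -> C) n :
  (forall k, k <> n -> u k = RtoC 0) -> is_series u (u n).
Proof.
  intros Hu; apply (filterlim_ext_loc (fun _ => u n)); [| apply filterlim_const].
  exists n; intros m Hm; symmetry; apply sum_n_single; auto.
Qed.

Lemma is_series_sum_n (F : nat -> nat -> C) (L : nat -> C) m :
  (forall j, (j <= m)%nat -> is_series (F j) (L j)) ->
  is_series (fun k => sum_n (fun j => F j k) m) (sum_n L m).
Proof.
  induction m as [|m IH]; intros HF.
  - rewrite sum_O; apply (is_series_ext (F 0%nat)); [intros; now rewrite sum_O | apply HF; lia].
  - rewrite sum_Sn; apply (is_series_ext (fun k => plus (sum_n (fun j => F j k) m) (F (S m) k)));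
      [intros; now rewrite sum_Sn |].
    apply (is_series_plus (V := C_NormedModule)); [apply IH; intros; apply HF | apply HF]; lia.
Qed.

Lemma geometric_sum_n_C (w : C) m : ((w - 1) * sum_n (fun j => w ^ j) m = w ^ S m - 1)%C.
Proof.
  induction m as [|m IH].
  - rewrite sum_O; simpl; ring.
  - rewrite sum_n_C_S, Cmult_plus_distr_l, IH; simpl; ring.
Qed.

(** * Power series in the unit disk *)

Definition is_pseries_on_disk (a : nat -> C) (h : C -> C) : Prop :=
  forall z, unit_disk z -> is_pseries a z (h z).

Definition CPSeries (a : nat -> C) (z : C) : C := CSeries (fun k => (z ^ k * a k)%C).

Definition CPS_derive (a : nat -> C) (n : nat) : C := (INR (S n) * a (S n))%C.

(* [(k + 1) ^ 2 * Cmod (a (S k))], written so that Coquelicot's radius lemmas show that it has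
   the radius of convergence of [Cmod (a k)]. *)
Definition taylor_weight (a : nat -> C) : nat -> R :=
  PS_derive (PS_incr_1 (PS_derive (fun k => Cmod (a k)))).

Lemma Cpow_taylor_remainder_le (z u : C) s m :
  0 <= s -> Cmod z <= s -> Cmod (z + u) <= s ->
  s * Cmod ((z + u) ^ S m - z ^ S m - INR (S m) * u * z ^ m)
    <= INR (S m) ^ 2 * Cmod u ^ 2 * s ^ m.
Proof.
  intros Hs Hz Hzu; induction m as [|m IH].
  - replace ((z + u) ^ 1 - z ^ 1 - INR 1 * u * z ^ 0)%C with (RtoC 0)
      by (apply injective_projections; simpl; ring).
    rewrite Cmod_0; simpl; nra.
  - replace ((z + u) ^ S (S m) - z ^ S (S m) - INR (S (S m)) * u * z ^ S m)%C with
      ((z + u) * ((z + u) ^ S m - z ^ S m - INR (S m) * u * z ^ m)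
       + INR (S m) * u ^ 2 * z ^ m)%C
      by (rewrite (S_INR (S m)), RtoC_plus; simpl; ring).
    set (R := Cmod ((z + u) ^ S m - z ^ S m - INR (S m) * u * z ^ m)) in *.
    eapply Rle_trans; [apply Rmult_le_compat_l, Cmod_triangle; lra |].
    rewrite !Cmod_mult, Cmod_pow, Cmod_R, Rabs_pos_eq, Cmod_pow by apply pos_INR.
    assert (Hc := pos_INR (S m)); assert (Hu := pow2_ge_0 (Cmod u)).
    assert (Hsm := pow_le s m Hs).
    assert (Hrec : Cmod (z + u) * (s * R) <= s * (INR (S m) ^ 2 * Cmod u ^ 2 * s ^ m))
      by (apply Rmult_le_compat; try easy; apply Cmod_ge_0 ||
          (apply Rmult_le_pos; [lra | apply Cmod_ge_0])).
    assert (Hlin : INR (S m) * Cmod u ^ 2 * Cmod z ^ m <= INR (S m) * Cmod u ^ 2 * s ^ m)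
      by (apply Rmult_le_compat_l; [nra | apply pow_incr; split; [apply Cmod_ge_0 | easy]]).
    assert (Hpos : 0 <= s * Cmod u ^ 2 * s ^ m * (INR (S m) + 1))
      by (apply Rmult_le_pos; [apply Rmult_le_pos; [apply Rmult_le_pos |] |]; lra).
    rewrite (S_INR (S m)); change (s ^ S m) with (s * s ^ m); fold R; nra.
Qed.

Lemma is_derive_of_quadratic_bound (F : R -> R) t l C d :
  0 < d ->
  (forall tau, Rabs tau < d -> Rabs (F (t + tau) - F t - tau * l) <= C * tau ^ 2) ->
  is_derive F t l.
Proof.
  intros Hd HF; apply is_derive_Reals; intros eps Heps.
  assert (HC := Rabs_pos C).
  assert (Hd' : 0 < Rmin d (eps / (Rabs C + 1)))
    by (apply Rmin_pos; [lra | apply Rdiv_lt_0_compat; lra]).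
  exists (mkposreal _ Hd'); intros tau Htau0 Htau; simpl in Htau.
  specialize (HF tau (Rlt_le_trans _ _ _ Htau (Rmin_l _ _))).
  assert (Hsmall := Rlt_le_trans _ _ _ Htau (Rmin_r _ _)).
  apply (Rmult_lt_compat_r (Rabs C + 1)) in Hsmall; [| lra].
  replace (eps / (Rabs C + 1) * (Rabs C + 1)) with eps in Hsmall by (field; lra).
  assert (Htp : 0 < Rabs tau) by now apply Rabs_pos_lt.
  replace ((F (t + tau) - F t) / tau - l) with ((F (t + tau) - F t - tau * l) / tau)
    by (field; auto).
  unfold Rdiv; rewrite Rabs_mult, Rabs_inv.
  apply (Rmult_lt_reg_r (Rabs tau)); [lra |].
  rewrite Rmult_assoc, Rinv_l, Rmult_1_r by lra.
  rewrite <- pow2_abs in HF; generalize (Rle_abs C); nra.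
Qed.

Section PowerSeriesOnDisk.

Variables (a : nat -> C) (h : C -> C).
Hypothesis Hh : is_pseries_on_disk a h.

Lemma CV_radius_Cmod_gt s :
  Rabs s < 1 -> Rbar_lt (Rabs s) (CV_radius (fun k => Cmod (a k))).
Proof.
  intros Hs.
  set (t := (1 + Rabs s) / 2).
  assert (Ht : Rabs s < t < 1) by (unfold t; lra).
  assert (Ht0 : 0 <= t) by (generalize (Rabs_pos s); lra).
  apply (Rbar_lt_le_trans _ t); [easy |].
  apply Rbar_not_lt_le; intros Hlt.
  apply (CV_disk_outside (fun k => Cmod (a k)) t); [now rewrite Rabs_pos_eq |].
  apply (is_lim_seq_ext (fun k => Cmod (scal (pow_n (RtoC t) k) (a k)))).
  - intros k; change (Cmod (RtoC t ^ k * a k) = Cmod (a k) * t ^ k).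
    rewrite Cmod_mult, Cmod_pow, Cmod_R, Rabs_pos_eq by easy; ring.
  - apply is_lim_seq_Cmod_terms; eexists; apply Hh.
    unfold unit_disk; rewrite Cmod_R, Rabs_pos_eq; lra.
Qed.

Lemma ex_series_Cmod_pseries s : Rabs s < 1 -> ex_series (fun k => Cmod (a k) * s ^ k).
Proof. intros Hs; apply ex_series_Rabs, CV_disk_inside, CV_radius_Cmod_gt, Hs. Qed.

Lemma is_pseries_on_disk_derive : is_pseries_on_disk (CPS_derive a) (CPSeries (CPS_derive a)).
Proof.
  intros z Hz.
  apply is_series_CSeries, (@ex_series_le C_AbsRing C_CompleteNormedModule _
    (fun k => Rabs (PS_derive (fun k => Cmod (a k)) k * Cmod z ^ k))).
  - intros k; change (Cmod (z ^ k * CPS_derive a k)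
                      <= Rabs (INR (S k) * Cmod (a (S k)) * Cmod z ^ k)).
    unfold CPS_derive; rewrite Rabs_pos_eq, !Cmod_mult, Cmod_pow, Cmod_R, Rabs_pos_eq;
      [lra | apply pos_INR |].
    generalize (pos_INR (S k)) (Cmod_ge_0 (a (S k))) (pow_le _ k (Cmod_ge_0 z)); intros.
    repeat apply Rmult_le_pos; easy.
  - apply CV_disk_inside; rewrite CV_radius_derive; apply CV_radius_Cmod_gt.
    now rewrite Rabs_pos_eq by apply Cmod_ge_0.
Qed.

Lemma ex_series_taylor_weight s :
  0 <= s < 1 -> ex_series (fun k => taylor_weight a k * s ^ k).
Proof.
  intros Hs; apply ex_series_Rabs, CV_disk_inside.
  unfold taylor_weight; rewrite CV_radius_derive, CV_radius_incr_1, CV_radius_derive.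
  apply CV_radius_Cmod_gt; rewrite Rabs_pos_eq; lra.
Qed.

Lemma taylor_weight_eq k : taylor_weight a k = INR (S k) ^ 2 * Cmod (a (S k)).
Proof. unfold taylor_weight, PS_derive, PS_incr_1; cbv beta iota; ring. Qed.

Lemma is_series_taylor_remainder z u :
  unit_disk z -> unit_disk (z + u) ->
  is_series (fun m => a (S m) * ((z + u) ^ S m - z ^ S m - INR (S m) * u * z ^ m))%C
    (h (z + u) - h z - u * CPSeries (CPS_derive a) z)%C.
Proof.
  intros Hz Hzu.
  assert (Hinc : is_series (fun m => (z + u) ^ S m * a (S m) - z ^ S m * a (S m))%C
                   (h (z + u) - h z)%C).
  { apply (is_series_incr_1 (fun k => (z + u) ^ k * a k - z ^ k * a k)%C).
    replace (plus (h (z + u) - h z)%C _) with (h (z + u) - h z)%C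
      by (apply injective_projections; simpl; ring).
    exact (is_series_minus _ _ _ _ (Hh _ Hzu) (Hh _ Hz)). }
  eapply is_series_ext;
    [| exact (is_series_minus _ _ _ _ Hinc
                (is_series_scal u _ _ (is_pseries_on_disk_derive _ Hz)))].
  intros m; change (((z + u) * (z + u) ^ m * a (S m) - z * z ^ m * a (S m))
      - u * (z ^ m * (INR (S m) * a (S m))) =
      a (S m) * ((z + u) * (z + u) ^ m - z * z ^ m - INR (S m) * u * z ^ m))%C.
  ring.
Qed.

Lemma pseries_taylor_remainder_le z u s :
  0 < s < 1 -> Cmod z <= s -> Cmod (z + u) <= s ->
  s * Cmod (h (z + u) - h z - u * CPSeries (CPS_derive a) z)
    <= Cmod u ^ 2 * PSeries (taylor_weight a) s.
Proof.
  intros Hs Hz Hzu.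
  assert (HS := is_series_taylor_remainder z u ltac:(unfold unit_disk; lra)
                  ltac:(unfold unit_disk; lra)).
  apply (Cmod_is_series_le _ _ (fun m => Cmod u ^ 2 / s * (taylor_weight a m * s ^ m)))
    in HS.
  - rewrite Series_scal_l in HS.
    apply (Rmult_le_compat_l s) in HS; [| lra].
    unfold PSeries; replace (Cmod u ^ 2 * _) with (s * (Cmod u ^ 2 / s *
      Series (fun k => taylor_weight a k * s ^ k))) by (field; lra).
    exact HS.
  - apply (@ex_series_scal_l R_AbsRing R_NormedModule), ex_series_taylor_weight; lra.
  - intros m; rewrite Cmod_mult, taylor_weight_eq.
    assert (HR := Cpow_taylor_remainder_le z u s m ltac:(lra) Hz Hzu).
    apply (Rmult_le_reg_l s); [lra |].
    replace (s * (Cmod u ^ 2 / s * (INR (S m) ^ 2 * Cmod (a (S m)) * s ^ m)))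
      with (Cmod (a (S m)) * (INR (S m) ^ 2 * Cmod u ^ 2 * s ^ m)) by (field; lra).
    generalize (Cmod_ge_0 (a (S m))); nra.
Qed.

Lemma is_derive_pseries_line (v z e : C) (t : R) :
  Cmod (z + t * e) < 1 ->
  is_derive (fun t : R => Re (v * h (z + t * e)))%C t
    (Re (v * (e * CPSeries (CPS_derive a) (z + t * e))))%C.
Proof.
  intros Hw; set (w := (z + t * e)%C) in *.
  set (s := (1 + Cmod w) / 2); set (W := PSeries (taylor_weight a) s).
  assert (Hs : 0 < s < 1 /\ Cmod w < s) by (generalize (Cmod_ge_0 w); unfold s; lra).
  assert (He := Cmod_ge_0 e).
  apply (is_derive_of_quadratic_bound _ _ _ (Cmod v * Cmod e ^ 2 * W / s)
           ((s - Cmod w) / (Cmod e + 1))); [apply Rdiv_lt_0_compat; lra |].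
  intros tau Htau; set (u := (tau * e)%C).
  assert (Hu : Cmod u = Rabs tau * Cmod e) by (unfold u; now rewrite Cmod_mult, Cmod_R).
  assert (Hwu : Cmod (w + u) <= s).
  { apply (Rmult_lt_compat_r (Cmod e + 1)) in Htau; [| lra].
    replace ((s - Cmod w) / (Cmod e + 1) * (Cmod e + 1)) with (s - Cmod w) in Htau
      by (field; lra).
    generalize (Cmod_triangle w u) (Rabs_pos tau); nra. }
  cbv beta; fold w.
  replace (z + RtoC (t + tau) * e)%C with (w + u)%C by (unfold w, u; rewrite RtoC_plus; ring).
  set (X := (h (w + u) - h w - u * CPSeries (CPS_derive a) w)%C).
  assert (HX := pseries_taylor_remainder_le w u s (proj1 Hs) (Rlt_le _ _ (proj2 Hs)) Hwu).
  fold W X in HX.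
  replace (Re (v * h (w + u)) - Re (v * h w) - tau * Re (v * (e * CPSeries (CPS_derive a) w)))
    with (Re (v * X)) by (unfold X, u, Re; simpl; ring).
  eapply Rle_trans; [apply re_le_Cmod |]; rewrite Cmod_mult.
  apply (Rmult_le_reg_l s); [lra |].
  replace (s * (Cmod v * Cmod e ^ 2 * W / s * tau ^ 2))
    with (Cmod v * (Cmod u ^ 2 * W)) by (rewrite Hu, Rpow_mult_distr, pow2_abs; field; lra).
  generalize (Cmod_ge_0 v); nra.
Qed.

End PowerSeriesOnDisk.

Lemma continuous_pseries_derive_line (a : nat -> C) (h : C -> C) (v z e : C) (t : R) :
  is_pseries_on_disk a h -> Cmod (z + t * e) < 1 ->
  continuous (fun t : R => Re (v * CPSeries (CPS_derive a) (z + t * e)))%C t.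
Proof.
  intros Hh Hw; apply (@ex_derive_continuous R_AbsRing R_NormedModule); eexists.
  exact (is_derive_pseries_line _ _ (is_pseries_on_disk_derive _ _ Hh) v z e t Hw).
Qed.

Lemma is_series_pseries_circle (a : nat -> C) (h : C -> C) r theta :
  is_pseries_on_disk a h -> 0 <= r < 1 ->
  is_series (fun k => a k * r ^ k * eitheta (INR k * theta))%C (h (r * eitheta theta))%C.
Proof.
  intros Hh Hr.
  assert (Hd : unit_disk (r * eitheta theta))
    by (unfold unit_disk; rewrite Cmod_mult, Cmod_R, Cmod_eitheta, Rabs_pos_eq; lra).
  eapply is_series_ext; [| exact (Hh _ Hd)].
  intros k; change ((r * eitheta theta) ^ k * a k = a k * r ^ k * eitheta (INR k * theta))%C.
  rewrite Cpow_mult_l, Cpow_eitheta, <- RtoC_pow; ring.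
Qed.

(** * Wirtinger derivatives of [h + conj g] *)

Lemma Derive_harmonic_line (a b : nat -> C) (h g : C -> C) (z v1 v2 e : C) (F : R -> R) :
  is_pseries_on_disk a h -> is_pseries_on_disk b g -> unit_disk z ->
  (forall t : R, F t = Re (v1 * h (z + t * e))%C + Re (v2 * g (z + t * e))%C) ->
  Derive F 0 = Re (v1 * (e * CPSeries (CPS_derive a) z))%C
               + Re (v2 * (e * CPSeries (CPS_derive b) z))%C.
Proof.
  intros Ha Hb Hz HF; rewrite (Derive_ext _ _ _ HF).
  assert (Ez : (z + RtoC 0 * e)%C = z) by (apply injective_projections; simpl; ring).
  assert (Hz0 : Cmod (z + RtoC 0 * e) < 1) by now rewrite Ez.
  apply is_derive_unique, (is_derive_plus (fun t : R => Re (v1 * h (z + t * e))%C)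
                                         (fun t : R => Re (v2 * g (z + t * e))%C)).
  - pose proof (is_derive_pseries_line _ _ Ha v1 z e 0 Hz0) as D; now rewrite Ez in D.
  - pose proof (is_derive_pseries_line _ _ Hb v2 z e 0 Hz0) as D; now rewrite Ez in D.
Qed.

Lemma Wirtinger_harmonic (a b : nat -> C) (h g : C -> C) z :
  is_pseries_on_disk a h -> is_pseries_on_disk b g -> unit_disk z ->
  dz (fun w => h w + Cconj (g w))%C z = CPSeries (CPS_derive a) z /\
  dzb (fun w => h w + Cconj (g w))%C z = Cconj (CPSeries (CPS_derive b) z).
Proof.
  intros Ha Hb Hz.
  assert (Ex : forall t : R, (z + (t, 0))%C = (z + t * 1)%C)
    by (intros; apply injective_projections; simpl; ring).
  assert (Ey : forall t : R, (z + (0, t))%C = (z + t * Ci)%C)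
    by (intros; apply injective_projections; simpl; ring).
  assert (Dxr := Derive_harmonic_line a b h g z 1 1 1
                   (fun t => fst (h (z + (t, 0)) + Cconj (g (z + (t, 0))))%C) Ha Hb Hz).
  assert (Dxi := Derive_harmonic_line a b h g z (- Ci) Ci 1
                   (fun t => snd (h (z + (t, 0)) + Cconj (g (z + (t, 0))))%C) Ha Hb Hz).
  assert (Dyr := Derive_harmonic_line a b h g z 1 1 Ci
                   (fun t => fst (h (z + (0, t)) + Cconj (g (z + (0, t))))%C) Ha Hb Hz).
  assert (Dyi := Derive_harmonic_line a b h g z (- Ci) Ci Ci
                   (fun t => snd (h (z + (0, t)) + Cconj (g (z + (0, t))))%C) Ha Hb Hz).
  unfold dz, dzb, dx, dy; rewrite Dxr, Dxi, Dyr, Dyi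
    by (intros t; rewrite ?Ex, ?Ey; destruct (h (z + _)%C), (g (z + _)%C); simpl; ring).
  destruct (CPSeries (CPS_derive a) z), (CPSeries (CPS_derive b) z).
  split; apply injective_projections; simpl; field.
Qed.

(** * Increments along a ray *)

Lemma Cmod_sub_le_Cmod_add_conj (P Q c : C) :
  Cmod c <= 1 -> Cmod P - Cmod Q <= Cmod (P + c * Cconj Q).
Proof.
  intros Hc.
  assert (T := Cmod_triangle (P + c * Cconj Q) (- (c * Cconj Q))).
  replace (P + c * Cconj Q + - (c * Cconj Q))%C with P in T by ring.
  rewrite Cmod_opp, Cmod_mult, Cmod_conj in T.
  generalize (Cmod_ge_0 Q) (Cmod_ge_0 c); nra.
Qed.

Lemma rotated_derivatives_le_qc (K : R) (P Q v1 v2 E c : C) :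
  Cmod v1 <= 1 -> Cmod v2 <= 1 -> Cmod E <= 1 -> Cmod c <= 1 ->
  Cmod Q ^ 2 < Cmod P ^ 2 ->
  (Cmod P + Cmod Q) ^ 2 <= K * (Cmod P ^ 2 - Cmod Q ^ 2) ->
  Re (v1 * (E * P)) + Re (v2 * (E * Q)) <= K * Cmod (P + c * Cconj Q).
Proof.
  intros Hv1 Hv2 HE Hc Hsp Hqc.
  assert (Hrot : forall v x : C, Cmod v <= 1 -> Re (v * (E * x)) <= Cmod x).
  { intros v x Hv; eapply Rle_trans; [apply Re_le_Cmod |].
    rewrite !Cmod_mult; generalize (Cmod_ge_0 v) (Cmod_ge_0 E) (Cmod_ge_0 x); intros.
    assert (Cmod v * Cmod E <= 1) by nra; nra. }
  assert (HX := Cmod_sub_le_Cmod_add_conj P Q c Hc).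
  generalize (Hrot v1 P Hv1) (Hrot v2 Q Hv2) (Cmod_ge_0 P) (Cmod_ge_0 Q); intros.
  assert (HPQ : Cmod Q < Cmod P) by nra.
  assert (Hdil : Cmod P + Cmod Q <= K * (Cmod P - Cmod Q)).
  { apply (Rmult_le_reg_r (Cmod P + Cmod Q)); [lra | nra]. }
  assert (0 <= K) by nra.
  nra.
Qed.

Lemma continuous_Cmod_comp (F : R -> C) t :
  continuous (fun t => fst (F t)) t -> continuous (fun t => snd (F t)) t ->
  continuous (fun t => Cmod (F t)) t.
Proof.
  intros H1 H2; unfold Cmod; apply continuous_sqrt_comp.
  apply (continuous_plus (fun t => fst (F t) ^ 2) (fun t => snd (F t) ^ 2));
    simpl; apply (@continuous_mult R_UniformSpace R_AbsRing); try easy;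
    apply (@continuous_mult R_UniformSpace R_AbsRing); try easy; apply continuous_const.
Qed.

Section Ray.

Variables (a b : nat -> C) (h g : C -> C).
Hypotheses (Ha : is_pseries_on_disk a h) (Hb : is_pseries_on_disk b g).

Local Notation h' := (CPSeries (CPS_derive a)).
Local Notation g' := (CPSeries (CPS_derive b)).

Lemma is_RInt_ray_increment (v1 v2 E : C) r :
  0 <= r -> Cmod (r * E) < 1 ->
  is_RInt (fun t => Re (v1 * (E * h' (t * E)))%C + Re (v2 * (E * g' (t * E)))%C) 0 r
    (Re (v1 * (h (r * E) - h 0))%C + Re (v2 * (g (r * E) - g 0))%C).
Proof.
  intros Hr HrE.
  assert (Hin : forall t, 0 <= t <= r -> Cmod (0 + t * E) < 1).
  { intros t Ht; rewrite Cmod_mult, Cmod_R, Rabs_pos_eq in HrE by lra.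
    rewrite Cplus_0_l, Cmod_mult, Cmod_R, Rabs_pos_eq by lra.
    generalize (Cmod_ge_0 E); nra. }
  set (F := fun t : R => Re (v1 * h (0 + t * E))%C + Re (v2 * g (0 + t * E))%C).
  assert (Hval : minus (F r) (F 0) =
    Re (v1 * (h (r * E) - h 0))%C + Re (v2 * (g (r * E) - g 0))%C).
  { unfold F; replace (0 + RtoC 0 * E)%C with (RtoC 0)
      by (apply injective_projections; simpl; ring).
    rewrite Cplus_0_l; unfold minus, plus, opp; simpl; ring. }
  rewrite <- Hval; apply (is_RInt_derive F); intros x Hx.
  all: rewrite Rmin_left, Rmax_right in Hx by lra.
  - pose proof (is_derive_pseries_line _ _ Ha v1 0 E x (Hin x Hx)) as D1.
    pose proof (is_derive_pseries_line _ _ Hb v2 0 E x (Hin x Hx)) as D2.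
    rewrite Cplus_0_l in D1, D2.
    exact (is_derive_plus _ _ _ _ _ D1 D2).
  - apply (continuous_plus (fun t : R => Re (v1 * (E * h' (t * E)))%C)
                           (fun t : R => Re (v2 * (E * g' (t * E)))%C)).
    + apply (continuous_ext (fun t : R => Re (v1 * E * h' (0 + t * E))%C));
        [intros t; now rewrite Cplus_0_l, Cmult_assoc |].
      exact (continuous_pseries_derive_line _ _ (v1 * E) 0 E x Ha (Hin x Hx)).
    + apply (continuous_ext (fun t : R => Re (v2 * E * g' (0 + t * E))%C));
        [intros t; now rewrite Cplus_0_l, Cmult_assoc |].
      exact (continuous_pseries_derive_line _ _ (v2 * E) 0 E x Hb (Hin x Hx)).
Qed.

Lemma continuous_rotated_derivatives (c E : C) (x : R) :
  Cmod (x * E) < 1 ->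
  continuous (fun t : R => Cmod (h' (t * E) + c * Cconj (g' (t * E)))) x.
Proof.
  intros Hx; assert (Hx0 : Cmod (0 + x * E) < 1) by now rewrite Cplus_0_l.
  apply continuous_Cmod_comp.
  - apply (continuous_ext (fun t : R => Re (1 * h' (0 + t * E))%C
                                        + Re (Cconj c * g' (0 + t * E))%C)).
    { intros t; rewrite Cplus_0_l.
      destruct (h' (t * E)%C), (g' (t * E)%C), c; simpl; ring. }
    apply (continuous_plus (fun t : R => Re (1 * h' (0 + t * E))%C)
                           (fun t : R => Re (Cconj c * g' (0 + t * E))%C));
      [apply (continuous_pseries_derive_line a h) | apply (continuous_pseries_derive_line b g)];
      easy.
  - apply (continuous_ext (fun t : R => Re (- Ci * h' (0 + t * E))%C
                                        + Re (Ci * Cconj c * g' (0 + t * E))%C)).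
    { intros t; rewrite Cplus_0_l.
      destruct (h' (t * E)%C), (g' (t * E)%C), c; simpl; ring. }
    apply (continuous_plus (fun t : R => Re (- Ci * h' (0 + t * E))%C)
                           (fun t : R => Re (Ci * Cconj c * g' (0 + t * E))%C));
      [apply (continuous_pseries_derive_line a h) | apply (continuous_pseries_derive_line b g)];
      easy.
Qed.

Lemma ray_increment_le_ell_star (K theta r : R) :
  K_quasiconformal K (fun z => h z + Cconj (g z))%C -> 0 < r < 1 ->
  Cmod (h (r * eitheta theta) - h 0) + Cmod (g (r * eitheta theta) - g 0)
    <= K * ell_star (fun z => h z + Cconj (g z))%C theta r.
Proof.
  intros [_ [Hsp Hqc]] Hr.
  set (E := eitheta theta); set (c := eitheta (-2 * theta)).
  assert (HE := Cmod_eitheta theta); assert (Hc := Cmod_eitheta (-2 * theta)); fold E c in HE, Hc.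
  assert (Hdisk : forall x, 0 <= x <= r -> unit_disk (x * E))
    by (intros x Hx; unfold unit_disk; rewrite Cmod_mult, Cmod_R, HE, Rabs_pos_eq; lra).
  destruct (Cmod_as_Re_rotation (h (r * E) - h 0)) as [v1 [Hv1 <-]].
  destruct (Cmod_as_Re_rotation (g (r * E) - g 0)) as [v2 [Hv2 <-]].
  assert (HFTC := is_RInt_ray_increment v1 v2 E r ltac:(lra) (Hdisk r ltac:(lra))).
  rewrite <- (is_RInt_unique _ _ _ _ HFTC).
  set (I := fun t : R => Cmod (h' (t * E) + c * Cconj (g' (t * E)))).
  assert (HI : ex_RInt I 0 r).
  { apply (@ex_RInt_continuous R_CompleteNormedModule); intros x Hx.
    rewrite Rmin_left, Rmax_right in Hx by lra.
    apply continuous_rotated_derivatives, Hdisk, Hx. }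
  assert (Hell : ell_star (fun z => h z + Cconj (g z))%C theta r = RInt I 0 r).
  { unfold ell_star; fold E c; apply RInt_ext.
    intros x Hx; rewrite Rmin_left, Rmax_right in Hx by lra.
    destruct (Wirtinger_harmonic a b h g _ Ha Hb (Hdisk x ltac:(lra))) as [-> ->].
    reflexivity. }
  rewrite Hell.
  replace (K * RInt I 0 r) with (RInt (fun t => K * I t) 0 r)
    by exact (@RInt_scal R_CompleteNormedModule I 0 r K HI).
  apply RInt_le; [lra | eexists; exact HFTC | now apply (@ex_RInt_scal R_NormedModule) |].
  intros x Hx.
  specialize (Hsp _ (Hdisk x ltac:(lra))); specialize (Hqc _ (Hdisk x ltac:(lra))).
  destruct (Wirtinger_harmonic a b h g _ Ha Hb (Hdisk x ltac:(lra))) as [Dz Dzb].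
  rewrite Dz, Dzb, Cmod_conj in Hsp, Hqc.
  apply rotated_derivatives_le_qc; lra.
Qed.

End Ray.

(** * Coefficients of a bounded trigonometric series *)

Definition root_angle (m j : nat) : R := INR j * (2 * PI / INR (S m)).

Definition root_sum (m : nat) (x : R) : C :=
  sum_n (fun j => eitheta (x * root_angle m j)) m.

Lemma root_angle_bounds m j : (j <= m)%nat -> 0 <= root_angle m j <= 2 * PI.
Proof.
  intros Hj; unfold root_angle.
  assert (HN : 0 < INR (S m)) by apply lt_0_INR, Nat.lt_0_succ.
  assert (Hj' : INR j <= INR (S m)) by (apply le_INR; lia).
  assert (Hstep : 0 <= 2 * PI / INR (S m))
    by (generalize PI_RGT_0; intros; apply Rdiv_le_0_compat; lra).
  split; [apply Rmult_le_pos; [apply pos_INR | easy] |].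
  replace (2 * PI) with (INR (S m) * (2 * PI / INR (S m))) at 2 by (field; lra).
  now apply Rmult_le_compat_r.
Qed.

Lemma root_sum_0 m : root_sum m 0 = INR (S m).
Proof.
  unfold root_sum; rewrite (sum_n_ext _ (fun _ => RtoC 1))
    by (intros; now rewrite Rmult_0_l, eitheta_0).
  induction m as [|m IH]; [now rewrite sum_O |].
  rewrite sum_n_C_S, IH, (S_INR (S m)), RtoC_plus; reflexivity.
Qed.

Lemma sum_n_pow_root_of_unity (w : C) m :
  (w ^ S m)%C = RtoC 1 -> w <> RtoC 1 -> sum_n (fun j => w ^ j)%C m = RtoC 0 :> C.
Proof.
  intros Hroot Hw.
  assert (Hw1 : (w - 1)%C <> RtoC 0).
  { intros E; apply Hw; replace w with (w - 1 + 1)%C by ring; rewrite E; ring. }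
  rewrite <- (Cmult_1_l (sum_n _ m)), <- (Cinv_l _ Hw1), <- Cmult_assoc,
    geometric_sum_n_C, Hroot; ring.
Qed.

Lemma root_step_neq_1 m k n :
  (k <= m)%nat -> (n <= m)%nat -> k <> n ->
  eitheta ((INR k - INR n) * (2 * PI / INR (S m))) <> RtoC 1.
Proof.
  intros Hk Hn Hkn.
  assert (HN := lt_0_INR _ (Nat.lt_0_succ m)); assert (HPI := PI_RGT_0).
  assert (Hkn' : 1 <= Rabs (INR k - INR n) <= INR m).
  { assert (Hk' := le_INR _ _ Hk); assert (Hn' := le_INR _ _ Hn).
    destruct (proj1 (Nat.lt_gt_cases k n) Hkn) as [Hlt | Hlt];
      apply le_INR in Hlt; rewrite S_INR in Hlt;
      generalize (pos_INR k) (pos_INR n); unfold Rabs; destruct Rcase_abs; lra. }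
  apply eitheta_neq_1; rewrite Rabs_mult, (Rabs_pos_eq (2 * PI / INR (S m)))
    by (apply Rdiv_le_0_compat; lra).
  split; [apply Rmult_lt_0_compat; [lra | apply Rdiv_lt_0_compat; lra] |].
  apply (Rmult_lt_reg_r (INR (S m))); [lra |].
  replace (Rabs (INR k - INR n) * (2 * PI / INR (S m)) * INR (S m))
    with (Rabs (INR k - INR n) * (2 * PI)) by (field; lra).
  rewrite S_INR; nra.
Qed.

Lemma root_sum_diff_0 m k n :
  (k <= m)%nat -> (n <= m)%nat -> k <> n -> root_sum m (INR k - INR n) = RtoC 0.
Proof.
  intros Hk Hn Hkn.
  assert (HN := lt_0_INR _ (Nat.lt_0_succ m)).
  set (w := eitheta ((INR k - INR n) * (2 * PI / INR (S m)))).
  replace (root_sum m (INR k - INR n)) with (sum_n (fun j => w ^ j)%C m)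
    by (apply sum_n_ext; intros j; unfold w, root_angle; rewrite Cpow_eitheta; f_equal; ring).
  apply sum_n_pow_root_of_unity; [| now apply root_step_neq_1].
  unfold w; rewrite Cpow_eitheta.
  replace (INR (S m) * ((INR k - INR n) * (2 * PI / INR (S m))))
    with (2 * INR k * PI + - (2 * INR n * PI)) by (field; lra).
  rewrite eitheta_add, eitheta_opp, !eitheta_2PI_mult.
  apply injective_projections; simpl; ring.
Qed.

Lemma Cmod_root_sum_le m x : Cmod (root_sum m x) <= INR (S m).
Proof.
  rewrite <- (Rmult_1_r (INR (S m))); apply Cmod_sum_n_le.
  intros; rewrite Cmod_eitheta; lra.
Qed.

Lemma is_series_root_average (c : nat -> C) (F : R -> C) n m :
  (forall t, is_series (fun k => c k * eitheta (INR k * t))%C (F t)) ->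
  is_series (fun k => c k * root_sum m (INR k - INR n))%C
    (sum_n (fun j => eitheta (- INR n * root_angle m j) * F (root_angle m j))%C m).
Proof.
  intros HF.
  apply (is_series_ext (fun k => sum_n (fun j => eitheta (- INR n * root_angle m j)
                                     * (c k * eitheta (INR k * root_angle m j)))%C m)).
  - intros k; unfold root_sum; rewrite <- sum_n_Cmult_l; apply sum_n_ext_C; intros j.
    replace ((INR k - INR n) * root_angle m j)
      with (INR k * root_angle m j + - INR n * root_angle m j) by ring.
    rewrite eitheta_add; ring.
  - apply is_series_sum_n; intros j _; apply (is_series_scal (V := C_NormedModule)), HF.
Qed.

Lemma Cmod_root_average_le (F : R -> C) (kap : C) B n m :
  (1 <= n <= m)%nat -> (forall t, 0 <= t <= 2 * PI -> Cmod (F t - kap) <= B) ->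
  Cmod (sum_n (fun j => eitheta (- INR n * root_angle m j) * F (root_angle m j))%C m)
    <= INR (S m) * B.
Proof.
  intros Hn HB.
  assert (H0 := root_sum_diff_0 m 0 n ltac:(lia) ltac:(lia) ltac:(lia)).
  change (INR 0) with 0 in H0; rewrite Rminus_0_l in H0; unfold root_sum in H0.
  rewrite (sum_n_ext_C _ (fun j => eitheta (- INR n * root_angle m j) * (F (root_angle m j) - kap)
                                 + kap * eitheta (- INR n * root_angle m j))%C) by (intros; ring).
  rewrite sum_n_Cplus, sum_n_Cmult_l, H0, Cmult_0_r, Cplus_0_r.
  apply Cmod_sum_n_le; intros j Hj.
  rewrite Cmod_mult, Cmod_eitheta, Rmult_1_l; apply HB, root_angle_bounds, Hj.
Qed.

Lemma coef_le_plus_tail (c : nat -> C) (F : R -> C) (kap : C) B n m :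
  (1 <= n <= m)%nat -> ex_series (fun k => Cmod (c k)) ->
  (forall t, is_series (fun k => c k * eitheta (INR k * t))%C (F t)) ->
  (forall t, 0 <= t <= 2 * PI -> Cmod (F t - kap) <= B) ->
  Cmod (c n) <= B + Series (fun k => Cmod (c (S m + k)%nat)).
Proof.
  intros Hn Hc HF HB.
  assert (HN : 0 < INR (S m)) by apply lt_0_INR, Nat.lt_0_succ.
  assert (HV := is_series_root_average c F n m HF).
  assert (HVB := Cmod_root_average_le F kap B n m Hn HB).
  set (V := sum_n _ m) in HV, HVB.
  set (u := fun k => (c k * root_sum m (INR k - INR n))%C) in HV.
  assert (Hhead : sum_n u m = (INR (S m) * c n)%C).
  { rewrite (sum_n_single u n m) by (lia || (intros j Hj Hjn; unfold u;
      rewrite root_sum_diff_0 by lia; apply Cmult_0_r)).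
    unfold u; rewrite Rminus_eq_0, root_sum_0; apply Cmult_comm. }
  assert (Htail : is_series (fun k => u (S m + k)%nat) (V - INR (S m) * c n)%C).
  { apply is_series_incr_n; [lia |].
    replace (plus (V - INR (S m) * c n)%C _) with V; [exact HV |].
    transitivity (plus (V - INR (S m) * c n)%C (INR (S m) * c n)%C);
      [apply injective_projections; simpl; ring | f_equal; symmetry; exact Hhead]. }
  apply (Cmod_is_series_le _ _ (fun k => INR (S m) * Cmod (c (S m + k)%nat))) in Htail.
  - rewrite Series_scal_l in Htail.
    assert (T := Cmod_triangle V (- (V - INR (S m) * c n))%C).
    replace (V + - (V - INR (S m) * c n))%C with (INR (S m) * c n)%C in T by ring.
    rewrite Cmod_opp, Cmod_mult, Cmod_R, Rabs_pos_eq in T by lra.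
    apply (Rmult_le_reg_l (INR (S m))); lra.
  - apply (@ex_series_scal_l R_AbsRing R_NormedModule).
    now apply (ex_series_incr_n (fun k => Cmod (c k))).
  - intros k; unfold u; rewrite Cmod_mult, Rmult_comm.
    apply Rmult_le_compat_r; [apply Cmod_ge_0 | apply Cmod_root_sum_le].
Qed.

Lemma Series_tail_lt (a : nat -> R) eps :
  ex_series a -> 0 < eps ->
  exists N0, forall m, (N0 <= m)%nat -> Series (fun k => a (S m + k)%nat) < eps.
Proof.
  intros Ha Heps.
  destruct (proj1 (is_series_Reals _ _) (Series_correct _ Ha) eps Heps) as [N0 HN0].
  exists N0; intros m Hm; specialize (HN0 m Hm); unfold R_dist in HN0.
  rewrite (Series_incr_n a (S m)) in HN0 by (lia || easy); simpl pred in HN0.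
  apply Rabs_lt_between in HN0; lra.
Qed.

Lemma Cmod_coef_le_of_trig_series (c : nat -> C) (F : R -> C) (kap : C) B n :
  (1 <= n)%nat -> ex_series (fun k => Cmod (c k)) ->
  (forall t, is_series (fun k => c k * eitheta (INR k * t))%C (F t)) ->
  (forall t, 0 <= t <= 2 * PI -> Cmod (F t - kap) <= B) ->
  Cmod (c n) <= B.
Proof.
  intros Hn Hc HF HB; apply Rle_plus_epsilon; intros eps Heps.
  destruct (Series_tail_lt _ eps Hc Heps) as [N0 HN0].
  assert (H := coef_le_plus_tail c F kap B n (Nat.max N0 n) ltac:(lia) Hc HF HB).
  specialize (HN0 (Nat.max N0 n) ltac:(lia)); lra.
Qed.

(** * The coefficient estimate *)

Lemma coef_sum_le_of_ray_increments (a b : nat -> C) (h g : C -> C) n r B :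
  is_pseries_on_disk a h -> is_pseries_on_disk b g -> (1 <= n)%nat -> 0 < r < 1 ->
  (forall theta, 0 <= theta <= 2 * PI ->
     Cmod (h (r * eitheta theta) - h 0)%C + Cmod (g (r * eitheta theta) - g 0)%C <= B) ->
  (Cmod (a n) + Cmod (b n)) * r ^ n <= B.
Proof.
  intros Ha Hb Hn Hr HB.
  destruct (Cmod_as_Re_rotation (a n)) as [l [Hl Hla]].
  destruct (Cmod_as_Re_rotation (b n)) as [m [Hm Hmb]].
  set (c k := ((l * a k + m * b k) * r ^ k)%C).
  assert (Hcn : Re (c n) = (Cmod (a n) + Cmod (b n)) * r ^ n).
  { unfold c; rewrite <- RtoC_pow, re_scal_r, re_plus, Hla, Hmb; reflexivity. }
  rewrite <- Hcn; eapply Rle_trans; [apply Re_le_Cmod |].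
  apply (Cmod_coef_le_of_trig_series c
           (fun t => l * h (r * eitheta t) + m * g (r * eitheta t))%C
           (l * h 0 + m * g 0)%C B n Hn).
  - apply (@ex_series_le R_AbsRing R_CompleteNormedModule _
           (fun k => Cmod (a k) * r ^ k + Cmod (b k) * r ^ k)).
    + intros k; change (norm ?x) with (Rabs x); rewrite Rabs_pos_eq by apply Cmod_ge_0.
      unfold c; rewrite Cmod_mult, <- RtoC_pow, Cmod_R, Rabs_pos_eq by (apply pow_le; lra).
      eapply Rle_trans; [apply Rmult_le_compat_r, Cmod_triangle; apply pow_le; lra |].
      rewrite !Cmod_mult, <- Rmult_plus_distr_r.
      apply Rmult_le_compat_r; [apply pow_le; lra |].
      generalize (Cmod_ge_0 (a k)) (Cmod_ge_0 (b k)); nra.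
    + apply (ex_series_plus (V := R_NormedModule));
        [apply (ex_series_Cmod_pseries a h) | apply (ex_series_Cmod_pseries b g)];
        rewrite ?Rabs_pos_eq; auto; lra.
  - intros t.
    eapply is_series_ext; [| apply (is_series_plus (V := C_NormedModule));
      apply (is_series_scal (V := C_NormedModule)), is_series_pseries_circle; eauto; lra].
    intros k; unfold c; change ((l * (a k * r ^ k * eitheta (INR k * t)))
      + m * (b k * r ^ k * eitheta (INR k * t)) =
      (l * a k + m * b k) * r ^ k * eitheta (INR k * t))%C; ring.
  - intros t Ht; specialize (HB t Ht).
    set (E := (r * eitheta t)%C) in *.
    replace (l * h E + m * g E - (l * h 0 + m * g 0))%C
      with (l * (h E - h 0) + m * (g E - g 0))%C by ring.
    eapply Rle_trans; [apply Cmod_triangle |]; rewrite !Cmod_mult.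
    generalize (Cmod_ge_0 (h E - h 0)) (Cmod_ge_0 (g E - g 0))
      (Cmod_ge_0 l) (Cmod_ge_0 m); intros; nra.
Qed.

Lemma le_of_forall_pow_scaled_le (X Y : R) n :
  (forall r, 0 < r < 1 -> X * r ^ n <= Y) -> X <= Y.
Proof.
  intros H.
  set (r k := 1 - (/ 2) ^ S k).
  assert (Hr01 : forall k, 0 < r k < 1).
  { intros k; unfold r; generalize (pow_lt (/ 2) (S k) ltac:(lra))
      (pow_lt_1_compat (/ 2) (S k) ltac:(lra) ltac:(lia)); lra. }
  assert (Hr : is_lim_seq r 1).
  { replace (Finite 1) with (Finite (1 - 0)) by (f_equal; ring).
    apply is_lim_seq_minus'; [apply is_lim_seq_const |].
    apply (is_lim_seq_incr_1 (fun k => (/ 2) ^ k)), is_lim_seq_geom.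
    rewrite Rabs_pos_eq; lra. }
  assert (Hf := is_lim_seq_continuous (fun x => X * x ^ n) r 1 ltac:(reg) Hr).
  cbv beta in Hf; rewrite pow1, Rmult_1_r in Hf.
  apply (is_lim_seq_le _ (fun _ => Y) X Y (fun k => H (r k) (Hr01 k)) Hf (is_lim_seq_const Y)).
Qed.

Lemma ell_star_le (f : C -> C) theta r M :
  0 < r < 1 -> Rbar_le (ell_star1 f theta) (Finite M) -> ell_star f theta r <= M.
Proof.
  intros Hr H; refine (Rbar_le_trans _ _ _ (proj1 (Lub_Rbar_correct _) _ _) H).
  now exists r.
Qed.

Theorem coef_bound_of_ell_star :
  forall (K M : R) (a b : nat -> C) (h g : C -> C),
    1 <= K -> 0 < M ->
    (forall z, unit_disk z -> is_pseries a z (h z)) ->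
    (forall z, unit_disk z ->
       is_pseries (fun n => match n with O => RtoC 0 | S _ => b n end) z (g z)) ->
    K_quasiconformal K (fun z => Cplus (h z) (Cconj (g z))) ->
    (forall theta, 0 <= theta <= 2 * PI ->
       Rbar_le (ell_star1 (fun z => Cplus (h z) (Cconj (g z))) theta) (Finite M)) ->
    forall n : nat, (1 <= n)%nat -> Cmod (a n) + Cmod (b n) <= K * M.
Proof.
  intros K M a b h g HK _ Ha Hb Hqc Hell n Hn.
  set (b' n := match n with O => RtoC 0 | S _ => b n end) in Hb.
  replace (Cmod (b n)) with (Cmod (b' n)) by (destruct n; [lia | reflexivity]).
  apply (le_of_forall_pow_scaled_le _ _ n); intros r Hr.
  apply (coef_sum_le_of_ray_increments a b' h g n r); auto.
  intros theta Htheta.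
  eapply Rle_trans; [exact (ray_increment_le_ell_star a b' h g Ha Hb K theta r Hqc Hr) |].
  apply Rmult_le_compat_l; [lra | now apply ell_star_le, Hell].
Qed.

(** * Sharpness *)

Lemma homeo_on_disk_scale (M : R) (f : C -> C) :
  M <> 0 -> (forall z, f z = (M * z)%C) -> homeo_on_disk f.
Proof.
  intros HM Hf.
  assert (HM' : RtoC M <> RtoC 0) by (intros E; apply HM; exact (f_equal fst E)).
  assert (Hscal : forall (k : C) z, continuous (fun w => (k * w)%C) z)
    by (intros k z; apply (filterlim_scal_r (V := C_NormedModule))).
  split; [| split].
  - intros z _; apply (continuous_ext (fun w => (M * w)%C)); [now intros |].
    apply Hscal.
  - intros z w _ _ E; rewrite !Hf in E.
    rewrite <- (Cmult_1_l z), <- (Cmult_1_l w), <- (Cinv_l M HM'), <- !Cmult_assoc, E.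
    reflexivity.
  - intros U HU _.
    apply (open_ext (fun w => U (/ M * w)%C)).
    + intros w; split.
      * intros HUw; exists (/ M * w)%C; split; [easy |].
        rewrite Hf, Cmult_assoc, Cinv_r, Cmult_1_l; auto.
      * intros [z [Hz <-]]; rewrite Hf, Cmult_assoc, Cinv_l, Cmult_1_l; auto.
    + apply (open_comp (fun w => (/ M * w)%C)); [intros; apply Hscal | exact HU].
Qed.

Section Extremal.

Variable M : R.
Hypothesis HM : 0 < M.

Let a : nat -> C := fun n => if Nat.eqb n 1 then RtoC M else RtoC 0.
Let b : nat -> C := fun n => match n with O => RtoC 0 | S _ => RtoC 0 end.
Let f : C -> C := fun z => Cplus (Cmult (RtoC M) z) (Cconj (RtoC 0)).

Lemma is_pseries_on_disk_linear : is_pseries_on_disk a (fun z => M * z)%C.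
Proof.
  intros z _; change (is_series (fun k => z ^ k * a k)%C (M * z)%C).
  replace (M * z)%C with (z ^ 1 * a 1%nat)%C by (unfold a; simpl; ring).
  apply (is_series_single (fun k => z ^ k * a k)%C 1); intros k Hk; unfold a.
  destruct (Nat.eqb_spec k 1); [lia | apply Cmult_0_r].
Qed.

Lemma is_pseries_on_disk_zero : is_pseries_on_disk b (fun _ => RtoC 0).
Proof.
  intros z _; change (is_series (fun k => z ^ k * b k)%C (RtoC 0)).
  eapply is_series_ext; [| apply (is_series_single (fun _ => RtoC 0) 0)]; [| easy].
  intros [|k]; unfold b; now rewrite Cmult_0_r.
Qed.

Lemma Wirtinger_linear z : unit_disk z -> dz f z = RtoC M /\ dzb f z = RtoC 0.
Proof.
  intros Hz.
  destruct (Wirtinger_harmonic a b _ _ z is_pseries_on_disk_linear is_pseries_on_disk_zero Hz)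
    as [Hdz Hdzb].
  assert (Ha' : CPSeries (CPS_derive a) z = RtoC M).
  { apply (is_series_C_unique (fun k => z ^ k * CPS_derive a k)%C).
    - exact (is_pseries_on_disk_derive _ _ is_pseries_on_disk_linear z Hz).
    - replace (RtoC M) with (z ^ 0 * CPS_derive a 0)%C
        by (unfold CPS_derive, a; apply injective_projections; simpl; ring).
      apply (is_series_single (fun k => z ^ k * CPS_derive a k)%C 0); intros [|k] Hk; [easy |].
      unfold CPS_derive, a; simpl; ring. }
  assert (Hb' : CPSeries (CPS_derive b) z = RtoC 0).
  { apply (is_series_C_unique (fun k => z ^ k * CPS_derive b k)%C).
    - exact (is_pseries_on_disk_derive _ _ is_pseries_on_disk_zero z Hz).
    - eapply is_series_ext; [| apply (is_series_single (fun _ => RtoC 0) 0)]; [| easy].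
      intros k; unfold CPS_derive, b; apply injective_projections; simpl; ring. }
  rewrite Ha' in Hdz; rewrite Hb' in Hdzb.
  split; [exact Hdz | etransitivity; [exact Hdzb | apply injective_projections; simpl; ring]].
Qed.

Lemma K_quasiconformal_linear : K_quasiconformal 1 f.
Proof.
  split; [| split].
  - apply (homeo_on_disk_scale M); [lra |].
    intros z; unfold f; apply injective_projections; simpl; ring.
  - intros z Hz; destruct (Wirtinger_linear z Hz) as [-> ->].
    rewrite Cmod_0, Cmod_R, Rabs_pos_eq; nra.
  - intros z Hz; destruct (Wirtinger_linear z Hz) as [-> ->].
    rewrite Cmod_0, Cmod_R, Rabs_pos_eq; nra.
Qed.

Lemma ell_star1_linear_le theta : Rbar_le (ell_star1 f theta) (Finite M).
Proof.
  apply (proj2 (Lub_Rbar_correct _)); intros x [r [Hr ->]]; simpl.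
  unfold ell_star; rewrite (RInt_ext _ (fun _ => M)).
  - rewrite RInt_const; change (scal (r - 0) M) with ((r - 0) * M); nra.
  - intros x Hx; rewrite Rmin_left, Rmax_right in Hx by lra.
    assert (Hd : unit_disk (x * eitheta theta))
      by (unfold unit_disk; rewrite Cmod_mult, Cmod_R, Cmod_eitheta, Rabs_pos_eq; lra).
    destruct (Wirtinger_linear _ Hd) as [-> ->].
    rewrite Cmult_0_r, Cplus_0_r, Cmod_R, Rabs_pos_eq; lra.
Qed.

End Extremal.

Theorem linear_map_is_extremal :
  forall M : R, 0 < M ->
    let a : nat -> C := fun n => if Nat.eqb n 1 then RtoC M else RtoC 0 in
    let b : nat -> C := fun _ => RtoC 0 in
    let h : C -> C := fun z => Cmult (RtoC M) z in
    let g : C -> C := fun _ => RtoC 0 in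
    (forall z, unit_disk z -> is_pseries a z (h z)) /\
    (forall z, unit_disk z ->
       is_pseries (fun n => match n with O => RtoC 0 | S _ => b n end) z (g z)) /\
    K_quasiconformal 1 (fun z => Cplus (h z) (Cconj (g z))) /\
    (forall theta, 0 <= theta <= 2 * PI ->
       Rbar_le (ell_star1 (fun z => Cplus (h z) (Cconj (g z))) theta) (Finite M)) /\
    Cmod (a 1%nat) + Cmod (b 1%nat) = 1 * M.
Proof.
  intros M HM a b h g.
  split; [| split; [| split; [| split]]].
  - exact (is_pseries_on_disk_linear M).
  - exact (is_pseries_on_disk_zero).
  - exact (K_quasiconformal_linear M HM).
  - intros theta _; exact (ell_star1_linear_le M HM theta).
  - unfold a, b; simpl; rewrite Cmod_R, Cmod_0, Rabs_pos_eq; lra.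
Qed.

Theorem theorem4 :
  (forall (K M : R) (a b : nat -> C) (h g : C -> C),
    1 <= K -> 0 < M ->
    (forall z, unit_disk z -> is_pseries a z (h z)) ->
    (forall z, unit_disk z ->
       is_pseries (fun n => match n with O => RtoC 0 | S _ => b n end) z (g z)) ->
    K_quasiconformal K (fun z => Cplus (h z) (Cconj (g z))) ->
    (forall theta, 0 <= theta <= 2 * PI ->
       Rbar_le (ell_star1 (fun z => Cplus (h z) (Cconj (g z))) theta) (Finite M)) ->
    forall n : nat, (1 <= n)%nat -> Cmod (a n) + Cmod (b n) <= K * M)
  /\
  (forall M : R, 0 < M ->
    let a : nat -> C := fun n => if Nat.eqb n 1 then RtoC M else RtoC 0 in
    let b : nat -> C := fun _ => RtoC 0 in
    let h : C -> C := fun z => Cmult (RtoC M) z in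
    let g : C -> C := fun _ => RtoC 0 in
    (forall z, unit_disk z -> is_pseries a z (h z)) /\
    (forall z, unit_disk z ->
       is_pseries (fun n => match n with O => RtoC 0 | S _ => b n end) z (g z)) /\
    K_quasiconformal 1 (fun z => Cplus (h z) (Cconj (g z))) /\
    (forall theta, 0 <= theta <= 2 * PI ->
       Rbar_le (ell_star1 (fun z => Cplus (h z) (Cconj (g z))) theta) (Finite M)) /\
    Cmod (a 1%nat) + Cmod (b 1%nat) = 1 * M).
Proof.
  split; [exact coef_bound_of_ell_star | exact linear_map_is_extremal].
Qed.
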